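(* The real form $$O'_{(4,1)}(x,y,z,w)=w^8+x^4y^2z^2+y^4x^2z^2+z^4x^2y^2-4x^2y^2z^2w^2$$ is an extremal element of $\mathcal P_{4,8}$.
   Context: $\mathcal P_{n,m}$ denotes the convex cone of all positive semidefinite real forms in $n$ variables of degree $m$. A form $F\in\mathcal P_{n,m}$ is extremal if $F=F_1+F_2$ with $F_1,F_2\in\mathcal P_{n,m}$ implies $F_i=\lambda_iF$ for some nonnegative reals $\lambda_i$. *)

From HB Require Import structures.
From mathcomp Require Import all_boot all_order all_algebra.
From mathcomp Require Import reals.
From mathcomp Require Import mpoly.
Set Implicit Arguments. Unset Strict Implicit. Unset Printing Implicit Defensive.
Import Order.TTheory GRing.Theory Num.Theory.
Local Open Scope ring_scope.

Definition is_form (R : realType) (n m : nat) (F : {mpoly R[n]}) : Prop :=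
  F \is m.-homog.

Definition is_psd (R : realType) (n : nat) (F : {mpoly R[n]}) : Prop :=
  forall x : 'I_n -> R, 0 <= F.@[x].

Definition in_P (R : realType) (n m : nat) (F : {mpoly R[n]}) : Prop :=
  is_form m F /\ is_psd F.

Definition extremal (R : realType) (n m : nat) (F : {mpoly R[n]}) : Prop :=
  in_P m F /\
  forall F1 F2 : {mpoly R[n]}, in_P m F1 -> in_P m F2 -> F = F1 + F2 ->
    exists l1 l2 : R, [/\ 0 <= l1, 0 <= l2, F1 = l1 *: F & F2 = l2 *: F].

Definition O41 (R : realType) : {mpoly R[4]} :=
  let x := 'X_(0 : 'I_4) in let y := 'X_(1 : 'I_4) in
  let z := 'X_(2 : 'I_4) in let w := 'X_(3 : 'I_4) in
  w ^+ 8 + x ^+ 4 * y ^+ 2 * z ^+ 2 + y ^+ 4 * x ^+ 2 * z ^+ 2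
  + z ^+ 4 * x ^+ 2 * y ^+ 2 - 4%:R * x ^+ 2 * y ^+ 2 * z ^+ 2 * w ^+ 2.

From mathcomp Require Import all_boot all_order all_algebra.
From mathcomp Require Import reals mpoly polyrcf.
From mathcomp Require Import ring lra zify.
Set Implicit Arguments. Unset Strict Implicit. Unset Printing Implicit Defensive.
Import Order.TTheory GRing.Theory Num.Theory.
Local Open Scope ring_scope.

(* O41 is nonnegative by AM-GM: writing A, B, C, u for the squares of x, y, z, w,
   it equals u^4 + A B C (A + B + C - 4 u).  If O41 = F1 + F2 with F1, F2 in
   P_{4,8}, then 0 <= F1 <= O41.  Comparing the growth of F1 and O41 along the
   curves t |-> (t^lam_i)_i shows that the Newton polytope of F1 lies in that of
   O41, a tetrahedron with 15 lattice points.  F1 vanishes at the eight zeros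
   (+-1, +-1, +-1, 1) of O41 and, being nonnegative, so do its first derivatives.
   These linear conditions on the 15 coefficients leave only multiples of O41. *)

Section PolySign.
Variable R : rcfType.
Implicit Types (p q : {poly R}) (a : R).

Lemma lead_coef_ge0 p : (forall t, 0 <= t -> 0 <= p.[t]) -> 0 <= lead_coef p.
Proof.
move=> p_ge0; rewrite leNgt; apply/negP => lc_lt0.
have [N hN] : exists N, forall x, N <= x -> lead_coef (- p) <= (- p).[x].
  by apply: poly_pinfty_gt_lc; rewrite lead_coefN oppr_gt0.
have [xN x0] : N <= Num.max N 0 /\ 0 <= Num.max N 0 by rewrite !le_max !lexx orbT.
have := hN _ xN; rewrite lead_coefN hornerN lerN2.
by have := p_ge0 _ x0; lra.
Qed.

Lemma size_le_of_pinfty_le p q :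
  (forall t, 0 <= t -> 0 <= p.[t] <= q.[t]) -> (size p <= size q)%N.
Proof.
move=> pq; rewrite leqNgt; apply/negP => lt_qp.
have lcp_ge0 : 0 <= lead_coef p by apply: lead_coef_ge0 => t /pq /andP[].
have lcqp_ge0 : 0 <= lead_coef (q - p).
  by apply: lead_coef_ge0 => t /pq /andP[_]; rewrite hornerD hornerN subr_ge0.
move: lcqp_ge0; rewrite lead_coefDr ?size_opp // lead_coefN oppr_ge0 => lcp_le0.
have : p == 0 by rewrite -lead_coef_eq0 eq_le lcp_le0 lcp_ge0.
by move/eqP=> p0; rewrite p0 size_poly0 in lt_qp.
Qed.

Lemma root_deriv_of_ge0 p a : (forall t, 0 <= p.[t]) -> root p a -> root p^`() a.
Proof.
(* Writing p = s (X - a), a nonzero s(a) would make p change sign at a. *)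
move=> p_ge0 /factor_theorem [s p_eq]; rewrite p_eq in p_ge0 *; apply/rootP.
rewrite derivM derivXsubC mulr1 hornerD hornerM !hornerXsubC subrr mulr0 add0r.
apply/eqP; apply: contraT => sa_neq0.
have e_gt0 : 0 < `|s.[a]| by rewrite normr_gt0.
have [d d_gt0 hd] := poly_cont a s e_gt0.
pose k := d / 2 / `|s.[a]|.
have k_gt0 : 0 < k by rewrite /k !divr_gt0.
have sk : k * `|s.[a]| = d / 2 by rewrite /k divfK ?gt_eqF.
pose y := a - s.[a] * k.
have ya : `|y - a| < d.
  rewrite /y addrAC subrr add0r normrN normrM (gtr0_norm k_gt0) mulrC sk; lra.
have := hd _ ya; have := p_ge0 y.
rewrite hornerM hornerXsubC /y addrAC subrr add0r -/y.
move=> py; rewrite ltr_norml => /andP[lo hi].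
have same_sign : 0 < s.[y] * s.[a].
  case: (ltgtP (s.[a]) 0) sa_neq0 lo hi => // [sa_lt0 | sa_gt0] _.
    by rewrite ltr0_norm // => _ hi; nra.
  by rewrite gtr0_norm // => lo _; nra.
by move: py; rewrite mulrN mulrA oppr_ge0 pmulr_rle0 // leNgt k_gt0.
Qed.
End PolySign.

Lemma edivn_uniq K q1 q2 r1 r2 : (r1 < K)%N -> (r2 < K)%N ->
  (K * q1 + r1 = K * q2 + r2)%N -> q1 = q2 /\ r1 = r2.
Proof.
move=> r1K r2K e; have K_gt0 : (0 < K)%N by lia.
have r12 : r1 = r2.
  by have := congr1 (modn^~ K) e; rewrite /= !(mulnC K) !modnMDl !modn_small.
by split=> //; move: e; rewrite r12 => /addIn /eqP; rewrite eqn_pmul2l // => /eqP.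
Qed.

Lemma digits_lt b n (f : 'I_n -> nat) :
  (forall i, f i < b)%N -> (\sum_(i < n) b ^ i * f i < b ^ n)%N.
Proof.
elim: n f => [|n IHn] f f_lt; first by rewrite big_ord0.
rewrite big_ord_recl expn0 mul1n.
under eq_bigr => i _ do rewrite lift0 expnS -mulnA.
rewrite -big_distrr /= expnS.
set S := (\sum_(i < n) _)%N.
have : (b * S.+1 <= b * b ^ n)%N by rewrite leq_mul2l IHn ?orbT.
by have := f_lt ord0; lia.
Qed.

Lemma digits_inj b n (f g : 'I_n -> nat) :
  (forall i, f i < b)%N -> (forall i, g i < b)%N ->
  (\sum_(i < n) b ^ i * f i = \sum_(i < n) b ^ i * g i)%N -> f =1 g.
Proof.
elim: n f g => [|n IHn] f g f_lt g_lt; first by move=> _ [].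
rewrite !big_ord_recl !expn0 !mul1n.
under eq_bigr => i _ do rewrite lift0 expnS -mulnA.
under [X in _ = (_ + X)%N]eq_bigr => i _ do rewrite lift0 expnS -mulnA.
rewrite -!big_distrr /= ![(f ord0 + _)%N]addnC ![(g ord0 + _)%N]addnC.
case/(edivn_uniq (f_lt ord0) (g_lt ord0)) => /IHn eq_lift eq0 i.
by case: (unliftP ord0 i) => [j ->|->]; [apply: eq_lift | ].
Qed.

Section CurvePoly.
Variables (R : rcfType) (n : nat).
Implicit Types (G F : {mpoly R[n]}) (p : 'I_n -> R) (lam : 'I_n -> nat).

Definition wdeg lam (m : 'X_{1..n}) : nat := (\sum_(i < n) lam i * m i)%N.

Definition curve_poly G p lam : {poly R} :=
  \sum_(m <- msupp G) (G@_m * \prod_(i < n) p i ^+ m i) *: 'X^(wdeg lam m).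

Lemma horner_curve_poly G p lam t :
  (curve_poly G p lam).[t] = G.@[fun i => p i * t ^+ lam i].
Proof.
rewrite mevalE /curve_poly horner_sum; apply: eq_bigr => m _.
rewrite hornerZ hornerXn -mulrA; congr (_ * _).
rewrite /wdeg -prodrXr -big_split /=; apply: eq_bigr => i _.
by rewrite exprMn exprM.
Qed.

Lemma coef_curve_poly G p lam k :
  (curve_poly G p lam)`_k =
  \sum_(m <- msupp G) G@_m * \prod_(i < n) p i ^+ m i * (wdeg lam m == k)%:R.
Proof.
rewrite /curve_poly coef_sum; apply: eq_bigr => m _.
by rewrite coefZ coefXn eq_sym.
Qed.

Lemma deriv_curve_poly1 G p lam :
  (curve_poly G p lam)^`().[1] =
  \sum_(m <- msupp G) G@_m * (\prod_(i < n) p i ^+ m i * (wdeg lam m)%:R).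
Proof.
rewrite /curve_poly raddf_sum horner_sum; apply: eq_bigr => m _.
by rewrite /= derivZ derivXn hornerZ hornerMn hornerXn expr1n -mulrA mulr_natr.
Qed.

Lemma psd_root_wdeg G p lam : (forall x, 0 <= G.@[x]) -> G.@[p] = 0 ->
  \sum_(m <- msupp G) G@_m * (\prod_(i < n) p i ^+ m i * (wdeg lam m)%:R) = 0.
Proof.
move=> G_ge0 Gp0; rewrite -deriv_curve_poly1; apply/rootP/root_deriv_of_ge0.
  by move=> t; rewrite horner_curve_poly.
apply/rootP; rewrite horner_curve_poly -Gp0; apply: meval_eq => i.
by rewrite expr1n mulr1.
Qed.

Lemma msupp_sum_eq G (s : seq 'X_{1..n}) (f : 'X_{1..n} -> R) :
  uniq s -> {subset msupp G <= s} ->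
  \sum_(m <- msupp G) G@_m * f m = \sum_(m <- s) G@_m * f m.
Proof.
move=> s_uniq sub_s.
rewrite [RHS](bigID (mem (msupp G))) /= [X in _ + X]big1 ?addr0; last first.
  by move=> m /memN_msupp_eq0 ->; rewrite mul0r.
rewrite -[RHS]big_filter; apply: perm_big; apply: uniq_perm.
- exact: msupp_uniq.
- exact: filter_uniq.
by move=> m; rewrite mem_filter andb_idr // => /sub_s.
Qed.

Lemma msupp_wdeg_le G F lam :
  (forall x, 0 <= G.@[x] <= F.@[x]) -> {in msupp G &, injective (wdeg lam)} ->
  forall m, m \in msupp G ->
  exists2 m', m' \in msupp F & (wdeg lam m <= wdeg lam m')%N.
Proof.
move=> GF w_inj m mG; pose one : 'I_n -> R := fun=> 1.
have prod_one (m' : 'X_{1..n}) : \prod_(i < n) one i ^+ m' i = 1.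
  by rewrite big1 // => i _; rewrite expr1n.
have size_le : (size (curve_poly G one lam) <= size (curve_poly F one lam))%N.
  by apply: size_le_of_pinfty_le => t _; rewrite !horner_curve_poly.
have coefGm : (curve_poly G one lam)`_(wdeg lam m) = G@_m.
  rewrite coef_curve_poly (bigD1_seq m) ?msupp_uniq //= eqxx prod_one !mulr1.
  rewrite big_seq_cond big1 ?addr0 // => m' /andP[m'G m'm].
  by rewrite (inj_in_eq w_inj) // (negbTE m'm) mulr0.
have m_lt : (wdeg lam m < size (curve_poly F one lam))%N.
  apply: leq_trans size_le; rewrite ltnNge; apply: contraL mG => /leq_sizeP.
  by move/(_ _ (leqnn _)); rewrite coefGm mcoeff_msupp => ->; rewrite eqxx.
have : lead_coef (curve_poly F one lam) != 0.
  by rewrite lead_coef_eq0 -size_poly_gt0 (leq_ltn_trans _ m_lt).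
rewrite lead_coefE coef_curve_poly; set top := (size _).-1.
have [/hasP[m' m'F /eqP w_top] _ | /hasPn no_top] :=
  boolP (has (fun m' => wdeg lam m' == top) (msupp F)).
  by exists m'; rewrite // w_top -ltnS prednK // (leq_ltn_trans _ m_lt).
rewrite big_seq big1 ?eqxx // => m' /no_top /negbTE ->; exact: mulr0.
Qed.

Lemma msupp_wdeg_le_homog d G F w :
  G \is d.-homog -> F \is d.-homog -> (forall x, 0 <= G.@[x] <= F.@[x]) ->
  forall m, m \in msupp G ->
  exists2 m', m' \in msupp F & (wdeg w m <= wdeg w m')%N.
Proof.
move=> /dhomogP Gd /dhomogP Fd GF m mG.
(* Refine w by the base-(d+1) digits of the exponents: an injective weight on
   monomials of degree d that still orders them as w does. *)
pose b := d.+1; pose K := (b ^ n)%N; pose lam i := (K * w i + b ^ i)%N.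
have digit_lt (m' : 'X_{1..n}) : mdeg m' = d -> forall i, (m' i < b)%N.
  by move=> m'd i; rewrite /b -m'd ltnS mdegE (bigD1 i) //= leq_addr.
have tail_lt (m' : 'X_{1..n}) : mdeg m' = d -> (\sum_(i < n) b ^ i * m' i < K)%N.
  by move=> m'd; apply: digits_lt (digit_lt _ m'd).
have lam_split (m' : 'X_{1..n}) :
    wdeg lam m' = (K * wdeg w m' + \sum_(i < n) b ^ i * m' i)%N.
  rewrite /wdeg big_distrr -big_split; apply: eq_bigr => i _.
  by rewrite /lam /= mulnDl mulnA.
have lam_inj : {in msupp G &, injective (wdeg lam)}.
  move=> m1 m2 m1G m2G; rewrite !lam_split.
  case/(edivn_uniq (tail_lt _ (Gd _ m1G)) (tail_lt _ (Gd _ m2G))) => _.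
  by move/(digits_inj (digit_lt _ (Gd _ m1G)) (digit_lt _ (Gd _ m2G)))/mnmP.
have [m' m'F le_lam] := msupp_wdeg_le GF lam_inj mG.
exists m' => //; move: le_lam; rewrite !lam_split.
have K_gt0 : (0 < K)%N by rewrite expn_gt0.
move=> le_lam; rewrite -ltnS -(ltn_pmul2l K_gt0) mulnS.
by have := tail_lt _ (Fd _ m'F); lia.
Qed.

End CurvePoly.

Definition expo := (nat * nat * nat * nat)%type.

Definition mnm4 (e : expo) : 'X_{1..4} :=
  let: (a, b, c, d) := e in [multinom [tuple a; b; c; d]].

Definition vec4 (T : Type) (a b c d : T) : 'I_4 -> T := fun i => nth d [:: a; b; c; d] i.

(* Peano arithmetic, so that [simpl] evaluates it on numerals. *)
Definition dot4 (u v w z : nat) (e : expo) : nat :=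
  let: (a, b, c, d) := e in (u * a + v * b + w * c + z * d)%coq_nat.

Lemma mnm4_vec4 a b c d (i : 'I_4) : mnm4 (a, b, c, d) i = vec4 a b c d i.
Proof. by rewrite multinomE; case: i => [[|[|[|[|//]]]] ?]. Qed.

Lemma mnm4E (m : 'X_{1..4}) : m = mnm4 (m 0%R, m 1%R, m 2%R, m 3%R).
Proof. by apply/mnmP; case=> [[|[|[|[|//]]]] ?]; congr (m _); apply: val_inj. Qed.

Lemma mdeg_mnm4 a b c d : mdeg (mnm4 (a, b, c, d)) = (a + b + c + d)%N.
Proof. by rewrite mdegE !big_ord_recl big_ord0 !mnm4_vec4 addn0 !addnA. Qed.

Lemma wdeg_vec4_mnm4 u v w z e : wdeg (vec4 u v w z) (mnm4 e) = dot4 u v w z e.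
Proof.
by case: e => [[[a b] c] d]; rewrite /wdeg !big_ord_recl big_ord0 !mnm4_vec4 addn0 !addnA.
Qed.

(* The lattice points of the Newton polytope of O41, as exponents of x, y, z, w. *)
Definition Lexp : seq expo := [:: (0,0,0,8); (1,1,1,5); (1,1,2,4); (1,2,1,4);
  (2,1,1,4); (2,2,2,2); (2,2,3,1); (2,2,4,0); (2,3,2,1); (2,3,3,0);
  (2,4,2,0); (3,2,2,1); (3,2,3,0); (3,3,2,0); (4,2,2,0)]%N.

Definition L : seq 'X_{1..4} := map mnm4 Lexp.

Lemma L_uniq : uniq L. Proof. by vm_compute. Qed.

(* The three facets of the Newton polytope of O41 through (0,0,0,8); the fourth
   one is w >= 0. *)
Lemma mem_L (m : 'X_{1..4}) : mdeg m = 8%N ->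
  (wdeg (vec4 0 4 4 3) m <= 24)%N -> (wdeg (vec4 4 0 4 3) m <= 24)%N ->
  (wdeg (vec4 4 4 0 3) m <= 24)%N -> m \in L.
Proof.
have grid : all (fun a => all (fun b => all (fun c =>
    let e := (a, b, c, 8 - a - b - c)%N in
    [&& (a + b + c <= 8)%N, (dot4 0 4 4 3 e <= 24)%N, (dot4 4 0 4 3 e <= 24)%N
      & (dot4 4 4 0 3 e <= 24)%N] ==> (mnm4 e \in L))
  (iota 0 9)) (iota 0 9)) (iota 0 9) by vm_compute.
rewrite [m]mnm4E mdeg_mnm4 !wdeg_vec4_mnm4.
set a := m _; set b := m _; set c := m _; set d := m _.
move=> deg8 f1 f2 f3.
move/allP/(_ a): grid; rewrite mem_iota => /(_ ltac:(lia)).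
move/allP/(_ b); rewrite mem_iota => /(_ ltac:(lia)).
move/allP/(_ c); rewrite mem_iota => /(_ ltac:(lia)).
have -> : (8 - a - b - c = d)%N by lia.
by move/implyP; apply; rewrite /dot4 in f1 f2 f3 *; apply/and4P; split; lia.
Qed.

Section O41.
Variable R : realType.

Definition mono4 (x y z w : R) (e : expo) : R :=
  let: (a, b, c, d) := e in x ^+ a * y ^+ b * z ^+ c * w ^+ d.

Definition sgn (s : bool) : R := (-1) ^+ s.

Lemma prod_vec4_mnm4 (x y z w : R) e :
  \prod_(i < 4) vec4 x y z w i ^+ mnm4 e i = mono4 x y z w e.
Proof.
by case: e => [[[a b] c] d]; rewrite !big_ord_recl big_ord0 !mnm4_vec4 /= mulr1 !mulrA.
Qed.

Lemma O41_eval (x : 'I_4 -> R) : (O41 R).@[x] =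
  x 3%R ^+ 8 + x 0%R ^+ 4 * x 1%R ^+ 2 * x 2%R ^+ 2
  + x 1%R ^+ 4 * x 0%R ^+ 2 * x 2%R ^+ 2 + x 2%R ^+ 4 * x 0%R ^+ 2 * x 1%R ^+ 2
  - 4%:R * x 0%R ^+ 2 * x 1%R ^+ 2 * x 2%R ^+ 2 * x 3%R ^+ 2.
Proof.
by rewrite /O41 /= !(mevalD, mevalB, mevalN, mevalM, rmorphXn, mevalXU, mevalMn, rmorph1).
Qed.

Lemma O41_vec4 (x y z w : R) : (O41 R).@[vec4 x y z w] =
  w ^+ 8 + x ^+ 4 * y ^+ 2 * z ^+ 2 + y ^+ 4 * x ^+ 2 * z ^+ 2
  + z ^+ 4 * x ^+ 2 * y ^+ 2 - 4%:R * x ^+ 2 * y ^+ 2 * z ^+ 2 * w ^+ 2.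
Proof. by rewrite O41_eval. Qed.

Lemma O41_monomials : O41 R = 'X_[mnm4 (0,0,0,8)] + 'X_[mnm4 (4,2,2,0)]
  + 'X_[mnm4 (2,4,2,0)] + 'X_[mnm4 (2,2,4,0)] - 4%:R *: 'X_[mnm4 (2,2,2,2)].
Proof.
have X_mnm4 a b c d : 'X_[mnm4 (a, b, c, d)] =
    'X_0%R ^+ a * 'X_1%R ^+ b * 'X_2%R ^+ c * 'X_3%R ^+ d :> {mpoly R[4]}.
  rewrite mpolyXE_id !big_ord_recl big_ord0 mulr1 !mulrA !mnm4_vec4.
  by congr ('X__ ^+ _ * 'X__ ^+ _ * 'X__ ^+ _ * 'X__ ^+ _); apply: val_inj.
by rewrite !X_mnm4 -mul_mpolyC rmorph_nat /O41 /=; ring.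
Qed.

Lemma O41_homog : O41 R \is 8.-homog.
Proof. by rewrite O41_monomials !(rpredB, rpredD, rpredZ) ?dhomogX //= mdeg_mnm4. Qed.

Lemma msupp_O41 : {subset msupp (O41 R) <=
  map mnm4 [:: (0,0,0,8); (4,2,2,0); (2,4,2,0); (2,2,4,0); (2,2,2,2)]%N}.
Proof.
move=> m; rewrite O41_monomials !inE.
have inX k : m \in msupp ('X_[k] : {mpoly R[4]}) -> m == k by rewrite msuppX inE.
move=> /msuppB_le; rewrite mem_cat => /orP[|/msuppZ_le/inX->]; last by rewrite !orbT.
do 3!(move=> /msuppD_le; rewrite mem_cat => /orP[|/inX->]; last by rewrite ?orbT).
by move/inX->.
Qed.

Lemma amgm3 (A B C : R) : 0 <= A -> 0 <= B -> 0 <= C ->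
  27%:R * (A * B * C) <= (A + B + C) ^+ 3.
Proof.
move=> A0 B0 C0.
have key : 2%:R * ((A + B + C) ^+ 3 - 27%:R * (A * B * C)) =
  (A + B + C) * ((A - B) ^+ 2 + (B - C) ^+ 2 + (C - A) ^+ 2) +
  6%:R * (A * (B - C) ^+ 2 + B * (C - A) ^+ 2 + C * (A - B) ^+ 2) by ring.
have h1 : 0 <= (A + B + C) * ((A - B) ^+ 2 + (B - C) ^+ 2 + (C - A) ^+ 2).
  by apply: mulr_ge0; [lra | rewrite !addr_ge0 ?sqr_ge0].
have h2 : 0 <= A * (B - C) ^+ 2 + B * (C - A) ^+ 2 + C * (A - B) ^+ 2.
  by rewrite !addr_ge0 // mulr_ge0 // sqr_ge0.
lra.
Qed.

Lemma quartic_amgm (A B C u : R) : 0 <= A -> 0 <= B -> 0 <= C -> 0 <= u ->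
  0 <= u ^+ 4 + A * B * C * (A + B + C - 4%:R * u).
Proof.
move=> A0 B0 C0 u0; have := amgm3 A0 B0 C0.
have P0 : 0 <= A * B * C by rewrite !mulr_ge0.
move: P0; set P := A * B * C; set S := A + B + C => P0 P_le.
have [S_ge|S_lt] := lerP (4%:R * u) S.
  by rewrite addr_ge0 ?exprn_ge0 ?mulr_ge0 ?subr_ge0.
have : S ^+ 3 * (S - 4%:R * u) <= 27%:R * P * (S - 4%:R * u).
  by rewrite ler_wnM2r // subr_le0 ltW.
have : 0 <= (3%:R * u - S) ^+ 2 * (2%:R * u ^+ 2 + (u + S) ^+ 2).
  by rewrite mulr_ge0 ?sqr_ge0 // addr_ge0 ?sqr_ge0 // mulr_ge0 // sqr_ge0.
have -> : (3%:R * u - S) ^+ 2 * (2%:R * u ^+ 2 + (u + S) ^+ 2) =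
  27%:R * u ^+ 4 + S ^+ 3 * (S - 4%:R * u) by ring.
lra.
Qed.

Lemma O41_ge0 x : 0 <= (O41 R).@[x].
Proof.
have := quartic_amgm (sqr_ge0 (x 0%R)) (sqr_ge0 (x 1%R)) (sqr_ge0 (x 2%R))
  (sqr_ge0 (x 3%R)).
by rewrite O41_eval; congr (_ <= _); ring.
Qed.

Lemma O41_sign s1 s2 s3 : (O41 R).@[vec4 (sgn s1) (sgn s2) (sgn s3) 1] = 0.
Proof. by rewrite O41_vec4 /sgn; case: s1; case: s2; case: s3; rewrite /=; ring. Qed.

Lemma O41_0001 : (O41 R).@[vec4 0 0 0 1] = 1.
Proof. by rewrite O41_vec4; ring. Qed.

Lemma mono4_sgn s1 s2 s3 e : mono4 (sgn s1) (sgn s2) (sgn s3) 1 e =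
  sgn ((s1 && odd e.1.1.1) (+) (s2 && odd e.1.1.2) (+) (s3 && odd e.1.2)).
Proof.
have sgnX (s : bool) k : sgn s ^+ k = sgn (s && odd k).
  by rewrite /sgn; case: s; rewrite /= ?expr1 ?signr_odd // expr0 expr1n.
case: e => [[[a b] c] d]; rewrite /mono4 expr1n mulr1 !sgnX /sgn -!exprD.
by rewrite -[LHS]signr_odd !oddD !oddb.
Qed.

(* Vanishing at (0,0,0,1) and at the eight points (+-1, +-1, +-1, 1), together
   with six first-order conditions at the latter, is a nonsingular linear system
   on the coefficients.  Signs are rewritten as parities, which [simpl] evaluates. *)
Lemma Lexp_kernel_trivial (g : expo -> R) :
  \sum_(e <- Lexp) g e * mono4 0 0 0 1 e = 0 ->
  (forall s1 s2 s3, \sum_(e <- Lexp) g e * mono4 (sgn s1) (sgn s2) (sgn s3) 1 e = 0) ->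
  (forall s1 s2 s3 u v w z, \sum_(e <- Lexp)
     g e * (mono4 (sgn s1) (sgn s2) (sgn s3) 1 e * (dot4 u v w z e)%:R) = 0) ->
  {in Lexp, g =1 fun=> 0}.
Proof.
pose sg s1 s2 s3 (e : expo) :=
  sgn ((s1 && odd e.1.1.1) (+) (s2 && odd e.1.1.2) (+) (s3 && odd e.1.2)).
move=> at_w val der.
have {}val s1 s2 s3 : \sum_(e <- Lexp) g e * sg s1 s2 s3 e = 0.
  by rewrite -[RHS](val s1 s2 s3); apply: eq_bigr => e _; rewrite mono4_sgn.
have {}der s1 s2 s3 u v w z :
    \sum_(e <- Lexp) g e * (sg s1 s2 s3 e * (dot4 u v w z e)%:R) = 0.
  by rewrite -[RHS](der s1 s2 s3 u v w z); apply: eq_bigr => e _; rewrite mono4_sgn.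
have := val false false false; have := val false false true; have := val false true false.
have := val false true true; have := val true false false; have := val true false true.
have := val true true false; have := val true true true.
have := der false false false 1 0 0 0; have := der false false false 0 1 0 0.
have := der false false false 0 0 1 0; have := der false false true 1 0 0 0.
have := der false false true 0 1 0 0; have := der false true false 1 0 0 0.
move: at_w; rewrite /sg unlock /= /sgn => *; move=> e; rewrite !inE.
by do 14!(case/orP => [/eqP -> /=|]; first lra); move=> /eqP -> /=; lra.
Qed.

Lemma meval_vec4_Lexp (G : {mpoly R[4]}) (a b c d : R) : {subset msupp G <= L} ->
  G.@[vec4 a b c d] = \sum_(e <- Lexp) G@_(mnm4 e) * mono4 a b c d e.
Proof.
move=> GL; rewrite mevalE (msupp_sum_eq _ L_uniq GL) big_map.
by apply: eq_bigr => e _; rewrite prod_vec4_mnm4.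
Qed.

Lemma psd_root_Lexp (G : {mpoly R[4]}) (a b c d : R) u v w z :
  {subset msupp G <= L} -> (forall x, 0 <= G.@[x]) -> G.@[vec4 a b c d] = 0 ->
  \sum_(e <- Lexp) G@_(mnm4 e) * (mono4 a b c d e * (dot4 u v w z e)%:R) = 0.
Proof.
move=> GL G_ge0 root; rewrite -[RHS](psd_root_wdeg (vec4 u v w z) G_ge0 root).
rewrite (msupp_sum_eq _ L_uniq GL) big_map; apply: eq_bigr => e _.
by rewrite prod_vec4_mnm4 wdeg_vec4_mnm4.
Qed.

Lemma msupp_sub_L (G : {mpoly R[4]}) : G \is 8.-homog ->
  (forall x, 0 <= G.@[x] <= (O41 R).@[x]) -> {subset msupp G <= L}.
Proof.
move=> G8 GO m mG.
have facet u v w z :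
    all (fun e => dot4 u v w z e <= 24)%N
      [:: (0,0,0,8); (4,2,2,0); (2,4,2,0); (2,2,4,0); (2,2,2,2)]%N ->
    (wdeg (vec4 u v w z) m <= 24)%N.
  move=> /allP bound.
  have [_ /msupp_O41 /mapP[e /bound e_le ->]] :=
    msupp_wdeg_le_homog (vec4 u v w z) G8 O41_homog GO mG.
  by rewrite wdeg_vec4_mnm4 => m_le; apply: leq_trans m_le e_le.
apply: mem_L; first by move/dhomogP: G8 => ->.
all: by apply: facet.
Qed.

Lemma O41_dominated (G : {mpoly R[4]}) : G \is 8.-homog ->
  (forall x, 0 <= G.@[x] <= (O41 R).@[x]) -> G = G.@[vec4 0 0 0 1] *: O41 R.
Proof.
move=> G8 GO; set k := G.@[_].
have G_ge0 x : 0 <= G.@[x] by case/andP: (GO x).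
have OL : {subset msupp (O41 R) <= L}.
  by apply: msupp_sub_L O41_homog _ => x; rewrite O41_ge0 lexx.
have GL := msupp_sub_L G8 GO.
have G_sign s1 s2 s3 : G.@[vec4 (sgn s1) (sgn s2) (sgn s3) 1] = 0.
  have /andP[_] := GO (vec4 (sgn s1) (sgn s2) (sgn s3) 1).
  by rewrite O41_sign => G_le0; apply/eqP; rewrite eq_le G_le0 G_ge0.
pose H := G - k *: O41 R.
have HL : {subset msupp H <= L}.
  by move=> m /msuppB_le; rewrite mem_cat => /orP[/GL|/msuppZ_le/OL].
have H_mnm4 (f : expo -> R) : \sum_(e <- Lexp) H@_(mnm4 e) * f e =
    \sum_(e <- Lexp) G@_(mnm4 e) * f e - k * \sum_(e <- Lexp) (O41 R)@_(mnm4 e) * f e.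
  rewrite mulr_sumr -sumrB; apply: eq_bigr => e _.
  by rewrite mcoeffB mcoeffZ mulrBl mulrA.
have H0 : {in Lexp, (fun e => H@_(mnm4 e)) =1 fun=> 0}.
  apply: Lexp_kernel_trivial => [|s1 s2 s3|s1 s2 s3 u v w z].
  - by rewrite -meval_vec4_Lexp // mevalB mevalZ O41_0001 mulr1 subrr.
  - by rewrite -meval_vec4_Lexp // mevalB mevalZ G_sign O41_sign mulr0 subrr.
  rewrite H_mnm4 (psd_root_Lexp u v w z GL G_ge0 (G_sign _ _ _)).
  by rewrite (psd_root_Lexp u v w z OL O41_ge0 (O41_sign _ _ _)) mulr0 subr0.
apply/mpolyP => m; rewrite mcoeffZ.
have [/mapP[e eL ->]|mL] := boolP (m \in L).
  by apply/eqP; rewrite -subr_eq0; have := H0 e eL; rewrite /= mcoeffB mcoeffZ => ->.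
by rewrite !memN_msupp_eq0 ?mulr0 //; apply: contra mL; [apply: OL|apply: GL].
Qed.

End O41.

Theorem proposition1 (R : realType) : extremal 8 (O41 R).
Proof.
have O41_P : in_P 8 (O41 R) by split; [exact: O41_homog|exact: O41_ge0].
split=> // F1 F2 [F1_8 F1_ge0] [_ F2_ge0] O41_eq.
have F1_le x : 0 <= F1.@[x] <= (O41 R).@[x].
  by rewrite F1_ge0 O41_eq mevalD lerDl F2_ge0.
have F1E := O41_dominated F1_8 F1_le; set k := F1.@[_] in F1E.
have /andP[k_ge0 k_le1] : 0 <= k <= 1 by rewrite -(O41_0001 R); exact: F1_le.
exists k, (1 - k); split => //; first by rewrite subr_ge0.
by apply: (addrI F1); rewrite -O41_eq {1}F1E -scalerDl addrC subrK scale1r.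
Qed.
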